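(* Let $T>0$, $\sigma:(0,\infty)^d\to\mathbb R^{d\times d}$, $\mathcal L:=\tfrac12\mathrm{Tr}(\sigma\sigma'\nabla^2)$, $b:(0,\infty)^d\to\mathbb R_+$ bounded continuous and $\mu>0$. Let $\Psi:(0,\infty)^d\to(0,\infty)$ be a strictly positive $C^2$ function and $\lambda>0$, $c$ constants such that: $\mathcal L\Psi(x)\le\lambda(1+\Psi(x))$ for $x\in(0,\infty)^d$; $\Psi(x)\to\infty$ as $x\to\bar x$ for every $\bar x\in\mathcal O$; for every $M>0$ there is $R$ with $\Psi(x)/\underline x\ge M$ whenever $\underline x\ge R$; and $c\Psi(x)\ge b(x)|\nabla\Psi(x)\sigma(x)|$ for all $x\in(0,\infty)^d$. Then for sufficiently large $L$, the function $\Phi(t,x):=e^{L(T-t)}\Psi(x)$ satisfies $-\partial_t\Phi-\mathcal L\Phi-\mu\Phi-b|\nabla\Phi\,\sigma|>0$ in $[0,T]\times(0,\infty)^d$.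
   Context: $\underline x=\sum_ix^i$; $\mathcal O=\{x\in\mathbb R_+^d:x^i=0\text{ for some }i\}$; $\nabla\Phi$ is the spatial gradient (a row vector) so $\nabla\Phi\,\sigma\in\mathbb R^d$. *)

From HB Require Import structures.
From mathcomp Require Import all_boot all_order all_algebra.
From mathcomp Require Import all_classical all_reals all_analysis.
Set Implicit Arguments. Unset Strict Implicit. Unset Printing Implicit Defensive.
Import Order.TTheory GRing.Theory Num.Theory.
Import numFieldNormedType.Exports.
Local Open Scope ring_scope.
Local Open Scope classical_set_scope.

Section Defs.
Variables (R : realType) (d : nat).
Notation V := 'rV[R]_d.

Definition ebase (i : 'I_d) : V := delta_mx 0 i.

Definition orthant : set V := [set x | forall i, 0 < x 0 i].

Definition Obound : set V :=
  [set x | (forall i, 0 <= x 0 i) /\ exists i, x 0 i = 0].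

(* underline x = sum of coordinates *)
Definition usum (x : V) : R := \sum_i x 0 i.

Definition enorm (v : V) : R := Num.sqrt (\sum_i v 0 i ^+ 2).

Definition partial (f : V -> R) (i : 'I_d) (x : V) : R := 'D_(ebase i) f x.
Definition partial2 (f : V -> R) (i j : 'I_d) (x : V) : R :=
  'D_(ebase i) (partial f j) x.

Definition grad (f : V -> R) (x : V) : V := \row_i partial f i x.

Definition C2_on_orthant (f : V -> R) : Prop :=
  forall x, orthant x ->
    [/\ differentiable f x,
        (forall i, differentiable (partial f i) x) &
        (forall i j, {for x, continuous (partial2 f i j)})].

Definition gen (sigma : V -> 'M[R]_d) (f : V -> R) (x : V) : R :=
  2^-1 * \sum_i \sum_j (sigma x *m (sigma x)^T) i j * partial2 f i j x.

End Defs.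

(* Both the generator and the gradient term are linear in the factor e^{L(T-t)} of Phi, so
   the expression equals e^{L(T-t)} (L Psi - gen Psi - mu Psi - b |grad Psi sigma|), which by
   the hypotheses is at least e^{L(T-t)} ((L - lam - mu - c) Psi - lam).  It therefore
   suffices that Psi be bounded below by some m > 0 on the orthant: Psi blows up near the
   boundary O, grows at least linearly at infinity, and is continuous and positive in
   between, so a compactness argument on a large box [0, B]^d gives m. *)
From HB Require Import structures.
From mathcomp Require Import all_boot all_order all_algebra.
From mathcomp Require Import all_classical all_reals all_analysis.
From mathcomp Require Import ring lra.
Import Order.TTheory GRing.Theory Num.Theory.
Import numFieldNormedType.Exports.
Local Open Scope ring_scope.
Local Open Scope classical_set_scope.

(* Unlike [deriveZ], no derivability is assumed: for k != 0 both sides are junk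
   values simultaneously. *)
Lemma deriveMl_cst (R : realType) (V : normedModType R) (f : V -> R) (k : R) x v :
  'D_v (fun y => k * f y) x = k * 'D_v f x.
Proof.
have [->|k0] := eqVneq k 0.
  rewrite mul0r (_ : (fun y => 0 * f y) = cst 0); first exact: derive_cst.
  by apply/funext => y; rewrite mul0r.
have [df|ndf] := pselect (derivable f x v); first exact: (@deriveZ R V R^o).
have ndkf : ~ derivable (fun y => k * f y) x v.
  move=> dkf; apply: ndf.
  have -> : f = k^-1 \*: (fun y => k * f y) :> (V -> R^o).
    by apply/funext => y /=; rewrite [RHS]mulrA mulVf // mul1r.
  exact: derivableZ.
by rewrite /derive (dvgP ndf) (dvgP ndkf) mulr0.
Qed.

Lemma derive1_expR_scaled (R : realType) (L T P t : R) :
  'D_1 (fun s => expR (L * (T - s)) * P) t = - L * expR (L * (T - t)) * P.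
Proof.
rewrite (_ : (fun s => _) = (fun s => P * (expR \o (fun s => L * (T - s))) s)); last first.
  by apply/funext => s; rewrite mulrC.
rewrite deriveMl_cst.
have dlin : is_derive t (1 : R) (fun s : R => L * (T - s)) (- L).
  have := @is_deriveZ R R^o R^o (fun s => T - s) L t 1 (0 - 1) (is_deriveB _ _).
  rewrite (_ : L *: (0 - 1) = - L :> R^o); first exact.
  by change (L * (0 - 1) = - L); rewrite sub0r mulrN1.
have dcomp := is_derive1_comp (is_derive_expR _) dlin.
by rewrite derive_val mulrC [_ * - L]mulrC.
Qed.

Section Scaling.
Variables (R : realType) (d : nat).
Implicit Types (f : 'rV[R]_d -> R) (k : R).

Lemma partialZ f k i : partial (fun y => k * f y) i = fun y => k * partial f i y.
Proof. by apply/funext => y; rewrite /partial deriveMl_cst. Qed.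

Lemma partial2Z f k i j x : partial2 (fun y => k * f y) i j x = k * partial2 f i j x.
Proof. by rewrite /partial2 partialZ /partial deriveMl_cst. Qed.

Lemma genZ sigma f k x : gen sigma (fun y => k * f y) x = k * gen sigma f x.
Proof.
rewrite /gen mulrCA; congr (_ * _); rewrite big_distrr; apply: eq_bigr => i _.
by rewrite big_distrr; apply: eq_bigr => j _; rewrite partial2Z mulrCA.
Qed.

Lemma gradZ f k x : grad (fun y => k * f y) x = k *: grad f x.
Proof. by apply/rowP => i; rewrite !mxE /partial deriveMl_cst. Qed.

Lemma enormZ k (v : 'rV[R]_d) : enorm (k *: v) = `|k| * enorm v.
Proof.
rewrite /enorm -sqrtr_sqr -sqrtrM ?sqr_ge0 // big_distrr; congr Num.sqrt.
by apply: eq_bigr => i _; rewrite mxE exprMn.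
Qed.

End Scaling.

Lemma compact_bounded_below_locally (R : realType) (X : topologicalType)
    (A P : set X) (f : X -> R) :
  compact A ->
  (forall x, A x -> exists2 e, 0 < e & \forall y \near x, P y -> e <= f y) ->
  exists2 e, 0 < e & forall x, A x -> P x -> e <= f x.
Proof.
move=> cA loc.
have cover : forall x, A x ->
    \forall y \near x & e \near (0 : R)^'+, P y -> e <= f y.
  move=> x /loc [e e0 near_x].
  exists ([set y | P y -> e <= f y], [set e' : R | e' < e]) => /=.
    by split => //; exact: nbhs_right_lt.
  by move=> [y e'] /= [fy e'e] Py; exact: le_trans (ltW e'e) (fy Py).
have := (proj1 (compact_near_coveringP A) cA) R (0 : R)^'+
  (fun e y => P y -> e <= f y) (at_right_proper_filter 0) cover.
move=> /(filterI (nbhs_right_gt 0)) /filter_ex[e [e0 He]].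
by exists e.
Qed.

Section LowerBound.
Variables (R : realType) (d : nat) (Psi : 'rV[R]_d -> R).
Hypothesis Psi_gt0 : forall x, orthant x -> 0 < Psi x.
Hypothesis Psi_cont : forall x, orthant x -> {for x, continuous Psi}.
Hypothesis Psi_blowup : forall xbar, Obound xbar -> forall M : R,
  exists2 delta : R, 0 < delta &
    forall x, orthant x -> `|x - xbar| < delta -> M <= Psi x.
Hypothesis Psi_growth : forall M : R, 0 < M -> exists Rr : R,
  forall x, orthant x -> Rr <= usum x -> M <= Psi x / usum x.

Lemma Psi_locally_bounded_below (x : 'rV[R]_d) : (forall i, 0 <= x ord0 i) ->
  exists2 e : R, 0 < e & \forall y \near x, orthant y -> e <= Psi y.
Proof.
move=> x_ge0; have [ox|nox] := pselect (orthant x).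
  have Px0 := Psi_gt0 x ox.
  have /cvgrPdist_lt/(_ (Psi x / 2)) := Psi_cont x ox.
  move=> /(_ (divr_gt0 Px0 (ltr0Sn _ 1))) near_x.
  exists (Psi x / 2); first by rewrite divr_gt0.
  by move: near_x; apply: filterS => y; rewrite ltr_distlC => /andP[? ?] _; lra.
have Ox : Obound x.
  split=> //; move/existsNP: nox => [i /negP xi_le0]; exists i.
  by apply/eqP; rewrite eq_le x_ge0 andbT leNgt.
have [delta delta0 Hdelta] := Psi_blowup x Ox 1.
exists 1 => //; have := @nbhsx_ballx _ _ x delta delta0; apply: filterS => y.
by rewrite -ball_normE /= distrC => ? oy; exact: Hdelta.
Qed.

Lemma coord_le_usum (x : 'rV[R]_d) i : orthant x -> x ord0 i <= usum x.
Proof.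
move=> ox; rewrite /usum (bigD1 i) //= lerDl.
by apply: sumr_ge0 => j _; exact/ltW/ox.
Qed.

Lemma Psi_bounded_below : exists2 m, 0 < m & forall x, orthant x -> m <= Psi x.
Proof.
have [Rr HRr] := Psi_growth 1 ltr01.
pose B := Num.max Rr 1.
pose box := [set v : 'rV[R]_d | forall i, `[0, B]%classic (v ord0 i)].
have cbox : compact box.
  by apply: (@rV_compact _ _ (fun=> `[0, B]%classic)) => i; exact: segment_compact.
have [e e0 He] : exists2 e, 0 < e & forall x, box x -> orthant x -> e <= Psi x.
  apply: compact_bounded_below_locally cbox _ => x box_x.
  by apply: Psi_locally_bounded_below => i; have /andP[] := box_x i.
exists (Num.min e 1); first by rewrite lt_min e0 ltr01.
move=> x ox; rewrite ge_min; have [uB|Bu] := leP (usum x) B.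
  apply/orP; left; apply: He => // i.
  by rewrite /= in_itv /= (ltW (ox i)) (le_trans (coord_le_usum x i ox) uB).
have [RrB oneB] : Rr <= B /\ 1 <= B by rewrite !le_max !lexx orbT.
have := HRr x ox (le_trans RrB (ltW Bu)).
have usum_gt0 : 0 < usum x by lra.
by rewrite ler_pdivlMr // mul1r => ?; apply/orP; right; lra.
Qed.

End LowerBound.

Theorem lemma3p7 (R : realType) (d : nat) (T : R)
  (sigma : 'rV[R]_d -> 'M[R]_d) (b : 'rV[R]_d -> R) (mu : R)
  (Psi : 'rV[R]_d -> R) (lam c : R) :
  0 < T ->
  (forall x, orthant x -> 0 <= b x) ->
  (exists K : R, forall x, orthant x -> b x <= K) ->
  {within orthant (d:=d), continuous b} ->
  0 < mu ->
  (forall x, orthant x -> 0 < Psi x) ->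
  C2_on_orthant Psi ->
  0 < lam ->
  (forall x, orthant x -> gen sigma Psi x <= lam * (1 + Psi x)) ->
  (forall xbar, Obound xbar -> forall M : R, exists2 delta : R, 0 < delta &
     forall x, orthant x -> `|x - xbar| < delta -> M <= Psi x) ->
  (forall M : R, 0 < M -> exists Rr : R, forall x, orthant x ->
     Rr <= usum x -> M <= Psi x / usum x) ->
  (forall x, orthant x -> b x * enorm (grad Psi x *m sigma x) <= c * Psi x) ->
  exists L0 : R, forall L : R, L0 <= L ->
    let Phi := fun (t : R) (x : 'rV[R]_d) => expR (L * (T - t)) * Psi x in
    forall t x, 0 <= t <= T -> orthant x ->
      0 < - 'D_1 (fun s => Phi s x) t - gen sigma (Phi t) x - mu * Phi t x
          - b x * enorm (grad (Phi t) x *m sigma x).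
Proof.
move=> _ _ _ _ mu0 Psi_gt0 Psi_C2 lam0 gen_le Psi_blowup Psi_growth grad_le.
have Psi_cont x : orthant x -> {for x, continuous Psi}.
  by move=> ox; have [dPsi _ _] := Psi_C2 x ox; exact: differentiable_continuous.
have [m m0 Psi_ge_m] := @Psi_bounded_below R d Psi Psi_gt0 Psi_cont Psi_blowup Psi_growth.
(* This choice makes the slack (L - lam - mu - c) Psi - lam at least m. *)
exists (lam + mu + `|c| + lam / m + 1) => L L_ge Phi t x _ ox.
rewrite /Phi derive1_expR_scaled genZ gradZ -scalemxAl enormZ gtr0_norm ?expR_gt0 //.
set E := expR _; set N := enorm _; set G := gen sigma Psi x.
have G_le : G <= lam * (1 + Psi x) := gen_le x ox.
have bN_le : b x * N <= c * Psi x := grad_le x ox.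
have Psi_x_gt0 := Psi_gt0 x ox; have Psi_x_ge_m := Psi_ge_m x ox.
have c_le := ler_norm c.
have slack : lam + m <= (L - lam - mu - c) * Psi x.
  have -> : lam + m = (lam / m + 1) * m by rewrite mulrDl mul1r divfK ?gt_eqF.
  apply: ler_pM; [|exact: ltW|lra|exact: Psi_x_ge_m].
  by rewrite addr_ge0 // divr_ge0 // ltW.
have E0 : 0 < E by rewrite expR_gt0.
have : 0 < E * (L * Psi x - G - mu * Psi x - b x * N) by apply: mulr_gt0; nra.
by rewrite !(mulrBr, mulrA, mulrN, mulNr); lra.
Qed.
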